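(* For a monoid $S$ and $n\in\mathbb N$ the following are equivalent: (i) $S$ is cancellative and right $n$-nilpotent; (ii) $S$ is both left $n$-nilpotent and right $n$-nilpotent; (iii) $S$ embeds into an $n$-nilpotent group.
   Context: A monoid is regarded as the semigroup $(S,\cdot)$ for the purposes of commutators. For an algebra $\mathbf A$, $k\ge1$ and congruences $\alpha_1,\dots,\alpha_k$, $M_{\mathbf A}(\alpha_1,\dots,\alpha_k)$ is the subalgebra of $\mathbf A^{\{0,1\}^k}$ generated by all $g$ such that for some $i$ and $(a,b)\in\alpha_i$, $g(x)=a$ if $x_i=0$ and $g(x)=b$ if $x_i=1$; $[\alpha_1,\dots,\alpha_k]$ is the smallest congruence $\delta$ such that for all $f\in M_{\mathbf A}(\alpha_1,\dots,\alpha_k)$: if $(f(x0),f(x1))\in\delta$ for all $x\in\{0,1\}^{k-1}\setminus\{(1,\dots,1)\}$, then $(f(1,\dots,1,0),f(1,\dots,1,1))\in\delta$. With $1$ total, $0$ trivial congruence: $(1]^1=1$, $(1]^{j+1}=[1,(1]^j]$; $[1)^1=1$, $[1)^{j+1}=[[1)^j,1]$. $\mathbf A$ is left $n$-nilpotent if $(1]^{n+1}=0$, right $n$-nilpotent if $[1)^{n+1}=0$. An $n$-nilpotent group is a group of nilpotency class at most $n$ (classical sense). *)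

From HB Require Import structures.
From mathcomp Require Import all_boot.

Set Implicit Arguments.
Unset Strict Implicit.
Unset Printing Implicit Defensive.

Local Open Scope group_scope.

Section Commutator.
Variable S : magmaType.

Definition congruence (R : S -> S -> Prop) : Prop :=
  [/\ (forall x, R x x),
      (forall x y, R x y -> R y x),
      (forall x y z, R x y -> R y z -> R x z) &
      (forall a b c d, R a b -> R c d -> R (a * c) (b * d))].

Definition total_cong : S -> S -> Prop := fun _ _ => True.

(* elements of S^{{0,1}^2}: the value f(x1,x2) is the field f_x1x2 *)
Record sq := Sq { f00 : S; f01 : S; f10 : S; f11 : S }.

Definition sq_mul (f g : sq) : sq :=
  Sq (f00 f * f00 g) (f01 f * f01 g) (f10 f * f10 g) (f11 f * f11 g).

(* M_S(alpha, beta): the subalgebra of S^{{0,1}^2} generated by the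
   alpha-generators (depending on x1) and the beta-generators (on x2) *)
Inductive M2 (alpha beta : S -> S -> Prop) : sq -> Prop :=
| M2_gen1 a b : alpha a b -> M2 alpha beta (Sq a a b b)
| M2_gen2 a b : beta a b -> M2 alpha beta (Sq a b a b)
| M2_mul f g : M2 alpha beta f -> M2 alpha beta g -> M2 alpha beta (sq_mul f g).

Definition term_cond (alpha beta delta : S -> S -> Prop) : Prop :=
  forall f, M2 alpha beta f -> delta (f00 f) (f01 f) -> delta (f10 f) (f11 f).

Definition comm (alpha beta : S -> S -> Prop) : S -> S -> Prop :=
  fun x y => forall delta, congruence delta -> term_cond alpha beta delta -> delta x y.

(* lser j = (1]^(j+1),  rser j = [1)^(j+1) *)
Fixpoint lser (j : nat) : S -> S -> Prop :=
  match j with 0 => total_cong | j'.+1 => comm total_cong (lser j') end.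
Fixpoint rser (j : nat) : S -> S -> Prop :=
  match j with 0 => total_cong | j'.+1 => comm (rser j') total_cong end.

Definition left_nilpotent (n : nat) : Prop := forall x y, lser n x y <-> x = y.
Definition right_nilpotent (n : nat) : Prop := forall x y, rser n x y <-> x = y.

End Commutator.

Definition cancellative (S : monoidType) : Prop :=
  (forall a b c : S, a * b = a * c -> b = c) /\
  (forall a b c : S, b * a = c * a -> b = c).

Section GroupNil.
Variable G : groupType.

Inductive gen_subgroup (A : G -> Prop) : G -> Prop :=
| gs_base x : A x -> gen_subgroup A x
| gs_one : gen_subgroup A 1
| gs_mul x y : gen_subgroup A x -> gen_subgroup A y -> gen_subgroup A (x * y)
| gs_inv x : gen_subgroup A x -> gen_subgroup A x^-1.

(* lower central series: lcs j = gamma_(j+1); gamma_1 = G,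
   gamma_(j+1) = [gamma_j, G] *)
Fixpoint lcs (j : nat) : G -> Prop :=
  match j with
  | 0 => fun _ => True
  | j'.+1 => gen_subgroup (fun z => exists x y, lcs j' x /\ z = [~ x, y])
  end.

Definition nilpotent_class_le (n : nat) : Prop := forall x, lcs n x -> x = 1.

End GroupNil.

Definition embeds_in_nilpotent_group (S : monoidType) (n : nat) : Prop :=
  exists (G : groupType) (phi : S -> G),
    [/\ injective phi, (forall x y, phi (x * y) = phi x * phi y), phi 1 = 1
      & nilpotent_class_le G n].

(* If phi : S -> G is multiplicative, the congruence "phi x = phi y modulo
   gamma_(j+1) G" satisfies the term conditions defining both (1]^(j+1) and
   [1)^(j+1), because gamma_(j+1) is central modulo gamma_(j+2); hence an
   embedding into a group of class n makes S left and right n-nilpotent, and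
   left nilpotency alone already forces cancellation.
   Conversely, the Malcev identity  u ~ v ==> u z v ~ v z u  (one step down
   the series [1)^j) yields both Ore conditions in a right n-nilpotent monoid,
   so a cancellative one embeds in its group of left fractions x^-1 y.  There,
   every element of gamma_(j+1) is a conjugate of some x^-1 y with x, y related
   by [1)^(j+1), and is therefore trivial when j = n. *)

From HB Require Import structures.
From mathcomp Require Import all_boot.

Set Implicit Arguments.
Unset Strict Implicit.
Unset Printing Implicit Defensive.

Local Open Scope group_scope.
Local Open Scope quotient_scope.

Section Congruence.
Variables (S : magmaType) (R : S -> S -> Prop).
Hypothesis congR : congruence R.

Lemma cong_refl x : R x x.
Proof. by case: congR. Qed.

Lemma cong_sym x y : R x y -> R y x.
Proof. by case: congR => _ symR _ _; apply: symR. Qed.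

Lemma cong_trans y x z : R x y -> R y z -> R x z.
Proof. by case: congR => _ _ transR _; apply: transR. Qed.

Lemma cong_mul a b c d : R a b -> R c d -> R (a * c) (b * d).
Proof. by case: congR => _ _ _ mulR; apply: mulR. Qed.

End Congruence.

Section CongruenceCommutator.
Variable S : magmaType.
Implicit Types alpha beta : S -> S -> Prop.

Lemma comm_congruence alpha beta : congruence (comm alpha beta).
Proof.
split=> [x | x y Hxy | x y z Hxy Hyz | a b c d Hab Hcd] delta Hdelta Htc.
- exact: (cong_refl Hdelta x).
- exact: (cong_sym Hdelta (Hxy _ Hdelta Htc)).
- exact: (cong_trans Hdelta (Hxy _ Hdelta Htc) (Hyz _ Hdelta Htc)).
- exact: (cong_mul Hdelta (Hab _ Hdelta Htc) (Hcd _ Hdelta Htc)).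
Qed.

Lemma comm_term_cond alpha beta : term_cond alpha beta (comm alpha beta).
Proof. by move=> f Mf Hf delta Hdelta Htc; apply: Htc Mf (Hf _ Hdelta Htc). Qed.

Lemma lser_congruence j : congruence (@lser S j).
Proof. by case: j => [|j] //; apply: comm_congruence. Qed.

Lemma rser_congruence j : congruence (@rser S j).
Proof. by case: j => [|j] //; apply: comm_congruence. Qed.

Lemma M2_mono alpha alpha' beta beta' f :
  (forall x y, alpha x y -> alpha' x y) -> (forall x y, beta x y -> beta' x y) ->
  M2 alpha beta f -> M2 alpha' beta' f.
Proof.
move=> Ha Hb; elim=> {f} [x y /Ha | x y /Hb | f g _ Mf _ Mg]; last exact: M2_mul.
- exact: M2_gen1.
- exact: M2_gen2.
Qed.

Definition sq_tr (f : sq S) := Sq (f00 f) (f10 f) (f01 f) (f11 f).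

Lemma M2_tr alpha beta f : M2 alpha beta f -> M2 beta alpha (sq_tr f).
Proof.
elim=> {f} [a b Hab | a b Hab | f g _ Mf _ Mg]; last exact: M2_mul Mf Mg.
- exact: M2_gen2.
- exact: M2_gen1.
Qed.

End CongruenceCommutator.

Section LeftNilpotentCancellative.
Variable S : monoidType.

Lemma lser_cancel_l j (a b c : S) : a * b = a * c -> lser j b c.
Proof.
move=> Eabc; elim: j => [|j IH] //= delta Hdelta Htc.
have := Htc _ (M2_mul (@M2_gen1 S _ _ a 1 I) (M2_gen2 _ IH)).
by rewrite /= !mul1g Eabc; apply; exact: (cong_refl Hdelta).
Qed.

Lemma lser_cancel_r j (a b c : S) : b * a = c * a -> lser j b c.
Proof.
move=> Eabc; elim: j => [|j IH] //= delta Hdelta Htc.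
have := Htc _ (M2_mul (M2_gen2 _ IH) (@M2_gen1 S _ _ a 1 I)).
by rewrite /= !mulg1 Eabc; apply; exact: (cong_refl Hdelta).
Qed.

Lemma left_nilpotent_cancellative n : left_nilpotent S n -> cancellative S.
Proof.
move=> Sn; split=> a b c Eabc; apply/Sn.
- exact: lser_cancel_l Eabc.
- exact: lser_cancel_r Eabc.
Qed.

End LeftNilpotentCancellative.

Section LowerCentralSeries.
Variable G : groupType.
Implicit Types g h k x y : G.

Lemma lcs1 j : @lcs G j 1.
Proof. by case: j => //= j; apply: gs_one. Qed.

Lemma lcsM j g h : lcs j g -> lcs j h -> lcs j (g * h).
Proof. by case: j => //= j; apply: gs_mul. Qed.

Lemma lcsV j g : lcs j g -> lcs j g^-1.
Proof. by case: j => //= j; apply: gs_inv. Qed.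

Lemma lcsJ j g h : lcs j g -> lcs j (g ^ h).
Proof.
elim: j g => [|j IH] //= g.
elim=> {g} [_ [k [x [Hk ->]]] | | g g' _ Hg _ Hg' | g _ Hg].
- by apply: gs_base; exists (k ^ h), (x ^ h); rewrite conjRg; split; first exact: IH.
- by rewrite conj1g; apply: gs_one.
- by rewrite conjMg; apply: gs_mul.
- by rewrite conjVg; apply: gs_inv.
Qed.

Lemma lcsR j k g : lcs j k -> lcs j.+1 [~ k, g].
Proof. by move=> Hk; apply: gs_base; exists k, g. Qed.

Definition eqmod_lcs j g h := lcs j (g^-1 * h).

Lemma eqmod_lcs_congruence j : congruence (eqmod_lcs j).
Proof.
rewrite /eqmod_lcs; split=> [g | g h | g h k | g h g' h'].
- by rewrite mulVg; apply: lcs1.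
- by move/lcsV; rewrite invgM invgK.
- by move=> Hgh Hhk; have := lcsM Hgh Hhk; rewrite -mulgA mulVKg.
- move=> Hgh Hgh'; have := lcsM (lcsJ g' Hgh) Hgh'.
  by rewrite conjgE invgM !mulgA mulgK.
Qed.

Lemma eqmod_lcs_mul2l j g h k : eqmod_lcs j (g * h) (g * k) = eqmod_lcs j h k.
Proof. by rewrite /eqmod_lcs invgM -mulgA mulKg. Qed.

Lemma eqmod_lcs_commute j k g : lcs j k -> eqmod_lcs j.+1 (g * k) (k * g).
Proof. by move=> /(lcsR g); rewrite /eqmod_lcs /commg conjgE invgM !mulgA. Qed.

Lemma eqmod_lcs_shift j x y k k' : lcs j k ->
  eqmod_lcs j.+1 (x * y * (k * k')) (x * k * (y * k')).
Proof.
have congG := eqmod_lcs_congruence j.+1.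
move=> Hk; rewrite !mulgA -(mulgA x y k) -(mulgA x k y).
apply: (cong_mul congG) (cong_refl congG k').
exact: (cong_mul congG) (cong_refl congG x) (eqmod_lcs_commute y Hk).
Qed.

End LowerCentralSeries.

Section LcsKernel.
Variables (S : monoidType) (G : groupType) (phi : S -> G).
Hypothesis phiM : {morph phi : x y / x * y}.

Definition lcs_kernel j (x y : S) := eqmod_lcs j (phi x) (phi y).

Lemma lcs_kernel_congruence j : congruence (lcs_kernel j).
Proof.
have congG := eqmod_lcs_congruence G j.
split=> [x | x y | x y z | a b c d]; rewrite /lcs_kernel ?phiM.
- exact: (cong_refl congG).
- exact: (cong_sym congG).
- exact: (cong_trans congG).
- exact: (cong_mul congG).
Qed.

Lemma M2_lcs_kernel j f : M2 (lcs_kernel j) (@total_cong S) f ->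
  exists2 k, lcs j k & eqmod_lcs j.+1 (phi (f00 f) * k) (phi (f10 f)) /\
                       eqmod_lcs j.+1 (phi (f01 f) * k) (phi (f11 f)).
Proof.
have congG := eqmod_lcs_congruence G j.+1.
elim=> {f} [a b Hab | a b _ | f g _ [k Hk [Hf0 Hf1]] _ [k' Hk' [Hg0 Hg1]]] /=.
- by exists ((phi a)^-1 * phi b) => //; rewrite mulVKg; split; apply: (cong_refl congG).
- by exists 1; [apply: lcs1 | rewrite !mulg1; split; apply: (cong_refl congG)].
- exists (k * k'); first exact: lcsM.
  rewrite !phiM; split; apply: (cong_trans congG (eqmod_lcs_shift _ _ _ Hk)).
  + exact: (cong_mul congG Hf0 Hg0).
  + exact: (cong_mul congG Hf1 Hg1).
Qed.

Lemma lcs_kernel_term_cond_r j :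
  term_cond (lcs_kernel j) (@total_cong S) (lcs_kernel j.+1).
Proof.
have congG := eqmod_lcs_congruence G j.+1.
move=> f /M2_lcs_kernel [k _ [Hf0 Hf1]] Hf.
apply: (cong_trans congG (cong_sym congG Hf0)) _; apply: (cong_trans congG _ Hf1).
exact: (cong_mul congG Hf (cong_refl congG k)).
Qed.

Lemma lcs_kernel_term_cond_l j :
  term_cond (@total_cong S) (lcs_kernel j) (lcs_kernel j.+1).
Proof.
have congG := eqmod_lcs_congruence G j.+1.
move=> f /M2_tr /M2_lcs_kernel /= [k _ [Hf0 Hf1]] Hf.
have Hk1 : eqmod_lcs j.+1 k 1.
  rewrite -(eqmod_lcs_mul2l _ (phi (f00 f))) mulg1.
  exact: (cong_trans congG Hf0 (cong_sym congG Hf)).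
apply: (cong_trans congG _ Hf1); rewrite -{1}[phi (f10 f)]mulg1.
exact: (cong_mul congG (cong_refl congG _) (cong_sym congG Hk1)).
Qed.

Lemma rser_lcs_kernel j x y : rser j x y -> lcs_kernel j x y.
Proof.
elim: j x y => [|j IH] x y //= Hxy; apply: Hxy; first exact: lcs_kernel_congruence.
by move=> f /(M2_mono IH (fun _ _ H => H)); apply: lcs_kernel_term_cond_r.
Qed.

Lemma lser_lcs_kernel j x y : lser j x y -> lcs_kernel j x y.
Proof.
elim: j x y => [|j IH] x y //= Hxy; apply: Hxy; first exact: lcs_kernel_congruence.
by move=> f /(M2_mono (fun _ _ H => H) IH); apply: lcs_kernel_term_cond_l.
Qed.

End LcsKernel.

Lemma embeds_in_nilpotent_group_nilpotent (S : monoidType) n :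
  embeds_in_nilpotent_group S n -> left_nilpotent S n /\ right_nilpotent S n.
Proof.
move=> [G [phi [phi_inj phiM _ Gn]]].
have kernel_eq x y : lcs_kernel phi n x y -> x = y.
  move/Gn/eqP; rewrite -(inj_eq (@mulgI _ (phi x))) mulg1 mulVKg.
  by move/eqP/phi_inj.
split=> x y; split=> [Hxy | ->].
- exact/kernel_eq/(lser_lcs_kernel phiM).
- exact: (cong_refl (lser_congruence S n)).
- exact/kernel_eq/(rser_lcs_kernel phiM).
- exact: (cong_refl (rser_congruence S n)).
Qed.

Definition left_ore (S : monoidType) := forall a b : S, exists p q, p * a = q * b.
Definition right_ore (S : monoidType) := forall a b : S, exists p q, a * p = b * q.

Section RightNilpotentOre.
Variable S : monoidType.

Lemma rser_malcev j (u v z : S) : rser j u v -> rser j.+1 (u * z * v) (v * z * u).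
Proof.
move=> Huv.
(* top row (u z u, u z u) is trivially related; bottom row is (u z v, v z u) *)
have Mf := M2_mul (M2_mul (@M2_gen2 S (rser j) (@total_cong S) (u * z) 1 I)
                          (M2_gen1 _ Huv))
                  (@M2_gen2 S (rser j) (@total_cong S) 1 (z * u) I).
have := comm_term_cond Mf; rewrite /= !mulg1 !mul1g !mulgA; apply.
exact: (cong_refl (rser_congruence S j.+1)).
Qed.

Lemma rser_left_ore j (a b : S) : exists p q, rser j (p * a) (q * b).
Proof.
elim: j => [|j [p [q /(rser_malcev 1)]]]; first by exists 1, 1.
rewrite !mulg1 !mulgA => /(cong_sym (rser_congruence S j.+1)).
by exists (q * b * p), (p * a * q).
Qed.

Lemma rser_right_ore j (a b : S) : exists p q, rser j (a * p) (b * q).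
Proof.
elim: j => [|j [p [q /(rser_malcev 1)]]]; first by exists 1, 1.
by rewrite !mulg1 !mulgA => Hpq; exists (p * (b * q)), (q * (a * p)); rewrite !mulgA.
Qed.

Lemma right_nilpotent_left_ore n : right_nilpotent S n -> left_ore S.
Proof. by move=> Sn a b; have [p [q /Sn]] := rser_left_ore n a b; exists p, q. Qed.

Lemma right_nilpotent_right_ore n : right_nilpotent S n -> right_ore S.
Proof. by move=> Sn a b; have [p [q /Sn]] := rser_right_ore n a b; exists p, q. Qed.

End RightNilpotentOre.

Section OreFractions.
Variable S : monoidType.
Hypotheses (mulSI : forall a b c : S, a * b = a * c -> b = c)
           (mulIS : forall a b c : S, b * a = c * a -> b = c)
           (oreS : left_ore S).
Implicit Types (a b : S) (r s : S * S).

Lemma ore_pair_subproof a b : exists pq : S * S, pq.1 * a == pq.2 * b.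
Proof. by have [p [q Epq]] := oreS a b; exists (p, q); apply/eqP. Qed.

Definition ore_pair a b := xchoose (ore_pair_subproof a b).

Lemma ore_pairP a b : (ore_pair a b).1 * a = (ore_pair a b).2 * b.
Proof. exact/eqP/(xchooseP (ore_pair_subproof a b)). Qed.

(* The pair (x, y) stands for the left fraction x^-1 * y. *)
Definition same_frac r s := exists p q, p * r.1 = q * s.1 /\ p * r.2 = q * s.2.

Lemma same_frac_refl r : same_frac r r.
Proof. by exists 1, 1. Qed.

Lemma same_frac_sym r s : same_frac r s -> same_frac s r.
Proof. by move=> [p [q [E1 E2]]]; exists q, p. Qed.

Lemma same_frac_trans r s t : same_frac r s -> same_frac s t -> same_frac r t.
Proof.
move=> [p [q [E1 E2]]] [p' [q' [E1' E2']]]; have [m [m' Em]] := oreS q p'.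
by exists (m * p), (m' * q'); rewrite -!mulgA E1 E2 !mulgA Em -!mulgA E1' E2'.
Qed.

Lemma same_frac_scale c r : same_frac r (c * r.1, c * r.2).
Proof. by exists c, 1; rewrite !mul1g. Qed.

Lemma same_frac_one x : same_frac (1, 1) (x, x).
Proof. by have := same_frac_scale x (1, 1); rewrite /= mulg1. Qed.

Lemma same_frac_any_mul r s p q :
  same_frac r s -> p * r.1 = q * s.1 -> p * r.2 = q * s.2.
Proof.
move=> [p' [q' [E1 E2]]] Epq; have [m [m' Em]] := oreS p p'.
have Eq : m * q = m' * q'.
  by apply: (@mulIS s.1); rewrite -!mulgA -Epq -E1 !mulgA Em.
by apply: (@mulSI m); rewrite !mulgA Em -!mulgA E2 !mulgA Eq.
Qed.

(* Testing a single, fixed pair of Ore multipliers decides [same_frac]. *)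
Definition same_fracb r s :=
  (ore_pair r.1 s.1).1 * r.2 == (ore_pair r.1 s.1).2 * s.2.

Lemma same_fracP r s : reflect (same_frac r s) (same_fracb r s).
Proof.
apply: (iffP eqP) => [E | /same_frac_any_mul]; last by apply; apply: ore_pairP.
by exists (ore_pair r.1 s.1).1, (ore_pair r.1 s.1).2; rewrite ore_pairP.
Qed.

Lemma same_fracb_refl : reflexive same_fracb.
Proof. by move=> r; apply/same_fracP/same_frac_refl. Qed.

Lemma same_fracb_sym : symmetric same_fracb.
Proof. by move=> r s; apply/same_fracP/same_fracP; apply: same_frac_sym. Qed.

Lemma same_fracb_trans : transitive same_fracb.
Proof.
move=> s r t /same_fracP Hrs /same_fracP Hst.
exact/same_fracP/(same_frac_trans Hrs Hst).
Qed.

Canonical same_frac_equiv :=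
  EquivRel same_fracb same_fracb_refl same_fracb_sym same_fracb_trans.

Local Notation frac := {eq_quot same_fracb}.

Lemma eq_pi_frac r s : \pi_frac r = \pi_frac s <-> same_frac r s.
Proof. by split=> [/eqmodP/same_fracP | /same_fracP/eqmodP]. Qed.

Lemma same_frac_repr r : same_frac (repr (\pi_frac r)) r.
Proof. by apply/eq_pi_frac; rewrite reprK. Qed.

Lemma same_frac_cat a0 a1 a2 b0 b1 b2 :
  same_frac (a0, a1) (b0, b1) -> same_frac (a1, a2) (b1, b2) ->
  same_frac (a0, a2) (b0, b2).
Proof.
move=> [u [v [/= E0 E1]]] [u' [v' [/= E1' E2']]]; have [m [m' Em]] := oreS v v'.
have Eu : m * u = m' * u'.
  by apply: (@mulIS a1); rewrite -!mulgA E1 E1' !mulgA Em.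
exists (m * u), (m * v); rewrite /= -!mulgA E0; split=> //.
by rewrite !mulgA Eu Em -!mulgA E2'.
Qed.

Definition mulf r s := ((ore_pair r.2 s.1).1 * r.1, (ore_pair r.2 s.1).2 * s.2).
Definition invf r := (r.2, r.1).

Lemma mulf_chain r s :
  exists b, same_frac r ((mulf r s).1, b) /\ same_frac s (b, (mulf r s).2).
Proof.
exists ((ore_pair r.2 s.1).1 * r.2); split; first exact: same_frac_scale.
by rewrite ore_pairP; apply: same_frac_scale.
Qed.

Lemma same_frac_mulf r s a0 a1 a2 :
  same_frac r (a0, a1) -> same_frac s (a1, a2) -> same_frac (mulf r s) (a0, a2).
Proof.
move=> Hr Hs; have [b [Hrb Hsb]] := mulf_chain r s.
apply: same_frac_cat.
- exact: same_frac_trans (same_frac_sym Hrb) Hr.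
- exact: same_frac_trans (same_frac_sym Hsb) Hs.
Qed.

Lemma same_frac_mulf_compat r r' s s' :
  same_frac r r' -> same_frac s s' -> same_frac (mulf r s) (mulf r' s').
Proof.
move=> Hr Hs; have [b [Hrb Hsb]] := mulf_chain r' s'.
exact: same_frac_mulf (same_frac_trans Hr Hrb) (same_frac_trans Hs Hsb).
Qed.

Lemma same_frac_chain3 r1 r2 r3 : exists a0 a1 a2 a3,
  [/\ same_frac r1 (a0, a1), same_frac r2 (a1, a2) & same_frac r3 (a2, a3)].
Proof.
have [b [H1 H2]] := mulf_chain r1 r2; set pq := ore_pair (mulf r1 r2).2 r3.1.
exists (pq.1 * (mulf r1 r2).1), (pq.1 * b), (pq.1 * (mulf r1 r2).2), (pq.2 * r3.2).
split.
- exact: same_frac_trans H1 (same_frac_scale _ _).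
- exact: same_frac_trans H2 (same_frac_scale _ _).
- by rewrite ore_pairP; apply: same_frac_scale.
Qed.

Definition frac_one : frac := \pi_frac (1, 1).
Definition frac_mul := lift_op2 frac mulf.
Definition frac_inv := lift_op1 frac invf.

Lemma pi_frac_mul : {morph \pi_frac : r s / mulf r s >-> frac_mul r s}.
Proof.
move=> r s; unlock frac_mul; apply/eq_pi_frac.
by apply: same_frac_mulf_compat; apply/same_frac_sym/same_frac_repr.
Qed.
Canonical pi_frac_mul_morph := PiMorph2 pi_frac_mul.

Lemma pi_frac_inv : {morph \pi_frac : r / invf r >-> frac_inv r}.
Proof.
move=> r; unlock frac_inv; apply/eq_pi_frac.
by have [p [q [E1 E2]]] := same_frac_repr r; exists q, p.
Qed.
Canonical pi_frac_inv_morph := PiMorph1 pi_frac_inv.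

Lemma frac_mulA : associative frac_mul.
Proof.
elim/quotW=> r1; elim/quotW=> r2; elim/quotW=> r3; rewrite !piE; apply/eq_pi_frac.
have [a0 [a1 [a2 [a3 [H1 H2 H3]]]]] := same_frac_chain3 r1 r2 r3.
apply: same_frac_trans (same_frac_mulf H1 (same_frac_mulf H2 H3)) _.
exact/same_frac_sym/(same_frac_mulf (same_frac_mulf H1 H2) H3).
Qed.

Lemma frac_mul1g : left_id frac_one frac_mul.
Proof.
elim/quotW=> -[x y]; rewrite !piE; apply/eq_pi_frac.
exact: same_frac_mulf (same_frac_one x) (same_frac_refl _).
Qed.

Lemma frac_mulg1 : right_id frac_one frac_mul.
Proof.
elim/quotW=> -[x y]; rewrite !piE; apply/eq_pi_frac.
exact: same_frac_mulf (same_frac_refl _) (same_frac_one y).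
Qed.

Lemma frac_mulVg : left_inverse frac_one frac_inv frac_mul.
Proof.
elim/quotW=> -[x y]; rewrite !piE; apply/eq_pi_frac.
apply: same_frac_trans (same_frac_sym (same_frac_one y)).
exact: same_frac_mulf (same_frac_refl _) (same_frac_refl _).
Qed.

Lemma frac_mulgV : right_inverse frac_one frac_inv frac_mul.
Proof.
elim/quotW=> -[x y]; rewrite !piE; apply/eq_pi_frac.
apply: same_frac_trans (same_frac_sym (same_frac_one x)).
exact: same_frac_mulf (same_frac_refl _) (same_frac_refl _).
Qed.

Definition frac_group : groupType := HB.pack_for groupType frac
  (isGroup.Build frac frac_mulA frac_mul1g frac_mulg1 frac_mulVg frac_mulgV).

Definition frac_embed a : frac_group := \pi_frac (1, a).

Lemma frac_embedM : {morph frac_embed : a b / a * b}.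
Proof.
move=> a b; apply/esym; rewrite [_ * _]piE; apply/eq_pi_frac.
have := same_frac_scale a (1, b); rewrite /= mulg1.
exact: same_frac_mulf (same_frac_refl _).
Qed.

Lemma frac_embed1 : frac_embed 1 = 1.
Proof. by []. Qed.

Lemma frac_embed_inj : injective frac_embed.
Proof.
move=> a b /eq_pi_frac [p [q [/= E1 E2]]].
by rewrite !mulg1 in E1; rewrite E1 in E2; apply: mulSI E2.
Qed.

Lemma frac_embed_ratio (g : frac_group) :
  exists a b, g = (frac_embed a)^-1 * frac_embed b.
Proof.
elim/quotW: g => -[a b]; exists a, b; apply/esym.
rewrite [_^-1]piE [_ * _]piE; apply/eq_pi_frac.
exact: same_frac_mulf (same_frac_refl (a, 1)) (same_frac_refl (1, b)).
Qed.

End OreFractions.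

Section CommutatorIdentities.
Variable G : groupType.
Implicit Types a b c d k : G.

Lemma commgMr k a b : [~ k, a * b] = [~ k, b] * [~ k, a] ^ b.
Proof. by rewrite !commgEl !conjgE !invgM !mulgA !mulgK. Qed.

Lemma commgVr k a : [~ k, a^-1] = ([~ k, a] ^ a^-1)^-1.
Proof. by rewrite !commgEl !conjgE !invgK !invgM !invgK !mulgA mulgV mul1g. Qed.

Lemma mulg_swap a b c d : a * b = c * d -> a^-1 * c = b * d^-1.
Proof. by move=> E; apply: (@mulgI _ a); rewrite mulVKg mulgA E mulgK. Qed.

End CommutatorIdentities.

Section RatioGroupNilpotent.
Variables (S : monoidType) (G : groupType) (phi : S -> G).
Hypotheses (phiM : {morph phi : x y / x * y})
           (phi_ratio : forall g, exists x y, g = (phi x)^-1 * phi y)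
           (oreSl : left_ore S) (oreSr : right_ore S).

Definition rser_ratio j g := exists x y, rser j x y /\ g = (phi x)^-1 * phi y.

Definition rser_ratio_conj j g := exists s, rser_ratio j (g ^ phi s).

Lemma rser_ratioV j g : rser_ratio j g -> rser_ratio j g^-1.
Proof.
move=> [x [y [Hxy ->]]]; exists y, x; rewrite invgM invgK; split=> //.
exact: (cong_sym (rser_congruence S j)).
Qed.

Lemma rser_ratioM j g h : rser_ratio j g -> rser_ratio j h -> rser_ratio j (g * h).
Proof.
have congS := rser_congruence S j.
move=> [x [y [Hxy ->]]] [x' [y' [Hxy' ->]]]; have [p [q Epq]] := oreSl y x'.
exists (p * x), (q * y'); split.
  apply: (cong_trans congS (cong_mul congS (cong_refl congS p) Hxy)).
  by rewrite Epq; apply: (cong_mul congS (cong_refl congS q) Hxy').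
have /mulg_swap Epq' : phi p * phi y = phi q * phi x' by rewrite -!phiM Epq.
by rewrite !phiM invgM !mulgA -(mulgA _ (phi p)^-1) Epq' !mulgA.
Qed.

Lemma rser_ratioJ j g s : rser_ratio j g -> rser_ratio j (g ^ phi s).
Proof.
have congS := rser_congruence S j.
move=> [x [y [Hxy ->]]]; exists (x * s), (y * s); split.
- exact: (cong_mul congS Hxy (cong_refl congS s)).
- by rewrite conjgE !phiM invgM !mulgA.
Qed.

Lemma rser_ratio_conj1 j : rser_ratio_conj j 1.
Proof.
exists 1, 1, 1; split; last by rewrite conj1g mulVg.
exact: (cong_refl (rser_congruence S j)).
Qed.

Lemma rser_ratio_conjV j g : rser_ratio_conj j g -> rser_ratio_conj j g^-1.
Proof. by move=> [s Hs]; exists s; rewrite conjVg; apply: rser_ratioV. Qed.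

Lemma rser_ratio_conjM j g h :
  rser_ratio_conj j g -> rser_ratio_conj j h -> rser_ratio_conj j (g * h).
Proof.
move=> [s Hg] [t Hh]; have [a [b Eab]] := oreSr s t.
exists (s * a); rewrite conjMg; apply: rser_ratioM.
- by rewrite phiM conjgM; apply: rser_ratioJ.
- by rewrite Eab phiM conjgM; apply: rser_ratioJ.
Qed.

Lemma rser_ratio_conjJ j g h : rser_ratio_conj j g -> rser_ratio_conj j (g ^ h).
Proof.
move=> [s Hg]; have [x [y ->]] := phi_ratio h; have [p [q Epq]] := oreSr y (x * s).
exists p; rewrite -conjgM -mulgA -phiM Epq !phiM !mulgA mulVg mul1g conjgM.
exact: rser_ratioJ.
Qed.

Lemma rser_ratio_commg j k s : rser_ratio j k -> rser_ratio_conj j.+1 [~ k, phi s].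
Proof.
move=> [x [y [Hxy ->]]].
(* [~ x^-1 y, z x] = (x z y)^-1 (y z x), a fraction of a Malcev pair *)
have Hz z : rser_ratio j.+1 [~ (phi x)^-1 * phi y, phi (z * x)].
  exists (x * z * y), (y * z * x); split; first exact: rser_malcev.
  by rewrite !phiM !commgEl !conjgE !invgM !invgK !mulgA !mulgK.
exists x; have := rser_ratioM (rser_ratioV (Hz 1)) (Hz s).
by rewrite mul1g phiM commgMr mulgA mulVg mul1g.
Qed.

Lemma rser_ratio_conj_commg j k g :
  rser_ratio_conj j k -> rser_ratio_conj j.+1 [~ k, g].
Proof.
move=> [s Hk]; have -> : [~ k, g] = [~ k ^ phi s, g ^ phi s] ^ (phi s)^-1.
  by rewrite -conjRg conjgK.
apply: rser_ratio_conjJ; have [x [y ->]] := phi_ratio (g ^ phi s).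
rewrite commgMr commgVr; apply: rser_ratio_conjM; first exact: rser_ratio_commg.
by apply/rser_ratio_conjJ/rser_ratio_conjV/rser_ratio_conjJ/rser_ratio_commg.
Qed.

Lemma lcs_rser_ratio_conj j g : lcs j g -> rser_ratio_conj j g.
Proof.
elim: j g => [|j IH] g /=.
  by move=> _; have [x [y ->]] := phi_ratio g; exists 1; apply: rser_ratioJ; exists x, y.
elim=> {g} [_ [k [g [Hk ->]]] | | g h _ Hg _ Hh | g _ Hg].
- exact/rser_ratio_conj_commg/IH.
- exact: rser_ratio_conj1.
- exact: rser_ratio_conjM.
- exact: rser_ratio_conjV.
Qed.

Lemma right_nilpotent_ratio_group n :
  right_nilpotent S n -> nilpotent_class_le G n.
Proof.
move=> Sn g /lcs_rser_ratio_conj [s [x [y [/Sn <- ]]]].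
by rewrite mulVg => /eqP; rewrite conjg_eq1 => /eqP.
Qed.

End RatioGroupNilpotent.

Lemma cancellative_right_nilpotent_embeds (S : monoidType) n :
  cancellative S -> right_nilpotent S n -> embeds_in_nilpotent_group S n.
Proof.
move=> [mulSI mulIS] Sn.
have oreSl := right_nilpotent_left_ore Sn; have oreSr := right_nilpotent_right_ore Sn.
exists (frac_group mulSI mulIS oreSl), (frac_embed mulSI mulIS oreSl); split.
- exact: frac_embed_inj.
- exact: frac_embedM.
- exact: frac_embed1.
- apply: right_nilpotent_ratio_group Sn => //.
  + exact: frac_embedM.
  + exact: frac_embed_ratio.
Qed.

Theorem theorem1p3 (S : monoidType) (n : nat) :
  (cancellative S /\ right_nilpotent S n <->
   left_nilpotent S n /\ right_nilpotent S n) /\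
  (left_nilpotent S n /\ right_nilpotent S n <->
   embeds_in_nilpotent_group S n).
Proof.
have embeds := @cancellative_right_nilpotent_embeds S n.
have nilpotent := @embeds_in_nilpotent_group_nilpotent S n.
split; split.
- by move=> [canS Sr]; apply/nilpotent/embeds.
- by move=> [Sl Sr]; split=> //; apply: left_nilpotent_cancellative Sl.
- by move=> [Sl Sr]; apply: embeds (left_nilpotent_cancellative Sl) Sr.
- exact: nilpotent.
Qed.
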